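(* Let $J\ge2$ be an integer and $\Lambda=[2,2^J]\cap\mathbb Q$. Let $\bm\Theta$ be the set of $\bm\theta=(\sigma^2,Q^2,\phi,\varsigma^2,\omega^2,\gamma^2,\alpha,\beta)$ with $\sigma^2,Q^2,\varsigma^2,\omega^2,\gamma^2,\alpha\in(0,\infty)$, $\phi\in(-1,0)\cup(0,1)$, $\beta\in(0,\pi]$. For $\tau\in\Lambda$ and $\bm\theta\in\bm\Theta$ define $$\nu_\tau(\bm\theta)=\frac{\sigma^2}{\tau}+\frac{6Q^2}{\tau^2}+\frac{\varsigma^2\{(\phi^2-1)\tau+2\phi(\phi^\tau-4\phi^{\tau/2}+3)\}}{(\phi-1)^3(\phi+1)\tau^2}+\frac{\tau^2\omega^2}{16}+\frac{(\tau^2+2)\gamma^2}{12\tau}+\frac{\alpha^2\{1-\cos(\beta\tau/2)\}^2}{\tau^2\{1-\cos\beta\}}.$$ If $\bm\theta_1,\bm\theta_2\in\bm\Theta$ satisfy $\nu_\tau(\bm\theta_1)=\nu_\tau(\bm\theta_2)$ for all $\tau\in\Lambda$, then $\bm\theta_1=\bm\theta_2$.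
   Context: For non-integer $\tau$ the power $\phi^\tau$ is defined as $e^{\tau\ln\phi}$ if $\phi\in(0,1)$ and as $e^{\tau(i\pi+\ln(-\phi))}$ if $\phi\in(-1,0)$ (so $\nu_\tau$ may be complex-valued). The six summands are, respectively, the Haar wavelet variances (extended to a continuous scale $\tau$) of a white noise with variance $\sigma^2$, a quantization noise with parameter $Q^2$, a causal AR(1) process with coefficient $\phi$ and innovation variance $\varsigma^2$, a linear drift with parameter $\omega$, a random walk with innovation variance $\gamma^2$, and a sinusoidal process $\alpha\sin(\beta t+U)$, $U\sim\mathcal U(0,2\pi)$. *)

From Stdlib Require Import Reals QArith.
From Coquelicot Require Import Coquelicot.
Open Scope R_scope.

Record theta := mkTheta {
  th_sigma2 : R; th_Q2 : R; th_phi : R; th_varsigma2 : R;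
  th_omega2 : R; th_gamma2 : R; th_alpha : R; th_beta : R }.

Definition in_Theta (t : theta) : Prop :=
  0 < th_sigma2 t /\ 0 < th_Q2 t /\ 0 < th_varsigma2 t /\ 0 < th_omega2 t /\
  0 < th_gamma2 t /\ 0 < th_alpha t /\
  ((-1 < th_phi t < 0) \/ (0 < th_phi t < 1)) /\
  (0 < th_beta t <= PI).

Definition in_Lambda (J : nat) (tau : R) : Prop :=
  (exists q : Q, Q2R q = tau) /\ 2 <= tau <= 2 ^ J.

(* phi^tau: e^{tau ln phi} if phi > 0, e^{tau (i pi + ln(-phi))} if phi < 0
   (written out via Euler's formula: |phi|^tau (cos(pi tau) + i sin(pi tau))). *)
Definition cpow (phi tau : R) : C :=
  if Rlt_dec 0 phi then RtoC (exp (tau * ln phi))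
  else (exp (tau * ln (- phi)) * cos (PI * tau),
        exp (tau * ln (- phi)) * sin (PI * tau)).

Definition nu (tau : R) (t : theta) : C :=
  let s2 := th_sigma2 t in let Q2 := th_Q2 t in let phi := th_phi t in
  let v2 := th_varsigma2 t in let w2 := th_omega2 t in let g2 := th_gamma2 t in
  let a := th_alpha t in let b := th_beta t in
  Cplus (RtoC (s2 / tau + 6 * Q2 / tau ^ 2))
  (Cplus
    (Cdiv
      (Cmult (RtoC v2)
        (Cplus (RtoC ((phi ^ 2 - 1) * tau))
               (Cmult (RtoC (2 * phi))
                  (Cplus (Cminus (cpow phi tau) (Cmult (RtoC 4) (cpow phi (tau / 2))))
                         (RtoC 3)))))
      (RtoC ((phi - 1) ^ 3 * (phi + 1) * tau ^ 2)))
    (RtoC (tau ^ 2 * w2 / 16 + (tau ^ 2 + 2) * g2 / (12 * tau)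
           + a ^ 2 * (1 - cos (b * tau / 2)) ^ 2 / (tau ^ 2 * (1 - cos b))))).

(* Multiplied by tau^2, nu_tau is a quasi-polynomial: a combination of
   tau^4, tau^3, tau, 1 and of the six exponentials phi^tau, phi^(tau/2),
   e^(+-i beta tau/2), e^(+-i beta tau).  We only use the scales
   tau_n = 2 + n/10 (n <= 20) of Lambda, on which every exponential is a
   geometric sequence d mu^n.  A fifth finite difference removes the quartic
   part, and a Vandermonde argument (16 samples, 12 geometric terms) shows that
   for every ratio mu <> 1 the total coefficient of mu^n is the same for
   theta1 and theta2.  The ratio of phi^(tau/2) has modulus < 1, that of
   e^(i beta tau/2) modulus 1; matching them identifies phi and beta, and
   their coefficients identify varsigma^2 and alpha.  Finally the quartic
   parts agree at tau = 2, 5/2, 3, 4, which determines sigma^2, Q^2, omega^2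
   and gamma^2. *)

From Stdlib Require Import Reals QArith Lra Lia List.
From Coquelicot Require Import Coquelicot.
Import ListNotations.
Open Scope R_scope.

Definition cexp (L x : R) : C := (exp L * cos x, exp L * sin x).

Lemma cexp_0 : cexp 0 0 = RtoC 1.
Proof. unfold cexp, RtoC. rewrite exp_0, cos_0, sin_0. f_equal; ring. Qed.

Lemma cexp_mult L M x y : Cmult (cexp L x) (cexp M y) = cexp (L + M) (x + y).
Proof. unfold cexp, Cmult; simpl. rewrite exp_plus, cos_plus, sin_plus. f_equal; ring. Qed.

Lemma cexp_pow L x n : Cpow (cexp L x) n = cexp (INR n * L) (INR n * x).
Proof.
  induction n as [|n IH].
  - simpl. rewrite !Rmult_0_l. symmetry. apply cexp_0.
  - rewrite Cpow_S, IH, cexp_mult, S_INR. f_equal; ring.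
Qed.

Lemma cexp_geom L M x y n :
  cexp (L + INR n * M) (x + INR n * y) = Cmult (cexp L x) (Cpow (cexp M y) n).
Proof. rewrite cexp_pow, cexp_mult. reflexivity. Qed.

Lemma cexp_geom_unit x y n :
  cexp 0 (x + INR n * y) = Cmult (cexp 0 x) (Cpow (cexp 0 y) n).
Proof. rewrite <- cexp_geom, Rmult_0_r, Rplus_0_r. reflexivity. Qed.

Lemma cexp_neq0 L x : cexp L x <> 0%C.
Proof.
  unfold cexp. intro E. injection E as Ec Es.
  pose proof (exp_pos L). pose proof (sin2_cos2 x). unfold Rsqr in *.
  assert (cos x = 0) by nra. assert (sin x = 0) by nra. nra.
Qed.

Lemma cexp_inj L M x y :
  - (PI / 2) <= x <= PI / 2 -> - (PI / 2) <= y <= PI / 2 ->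
  cexp L x = cexp M y -> L = M /\ x = y.
Proof.
  intros Hx Hy E. unfold cexp in E. injection E as Ec Es.
  pose proof (exp_pos L). pose proof (exp_pos M).
  pose proof (sin2_cos2 x). pose proof (sin2_cos2 y). unfold Rsqr in *.
  assert (Emod : exp L = exp M).
  { assert (exp L ^ 2 = exp M ^ 2).
    { replace (exp L ^ 2) with ((exp L * sin x) ^ 2 + (exp L * cos x) ^ 2) by nra.
      rewrite Ec, Es. nra. }
    nra. }
  split.
  - apply exp_inv. exact Emod.
  - apply sin_inj; auto. rewrite Emod in Es. apply Rmult_eq_reg_l with (exp M); lra.
Qed.

Lemma Cmult_integral (a b : C) : Cmult a b = 0%C -> a = 0%C \/ b = 0%C.
Proof.
  intro H. destruct (Ceq_dec a 0) as [Ha|Ha]; [now left|right].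
  replace b with (Cmult (Cinv a) (Cmult a b)) by (field; exact Ha).
  rewrite H. ring.
Qed.

Lemma RtoC_mult_reg (x y : R) (z : C) :
  z <> 0%C -> Cmult (RtoC x) z = Cmult (RtoC y) z -> x = y.
Proof.
  intros hz E.
  assert (Hd : Cmult (RtoC (x - y)) z = 0%C).
  { rewrite RtoC_minus.
    transitivity (Cminus (Cmult (RtoC x) z) (Cmult (RtoC y) z)); [ring | rewrite E; ring]. }
  destruct (Cmult_integral _ _ Hd) as [Hxy|]; [|contradiction].
  injection Hxy. lra.
Qed.

Lemma RtoC_neq0 r : r <> 0 -> RtoC r <> 0%C.
Proof. intros h E. injection E. exact h. Qed.

Fixpoint expsum (l : list (C * C)) (n : nat) : C :=
  match l with
  | nil => 0%C
  | (d, m) :: l' => Cplus (Cmult d (Cpow m n)) (expsum l' n)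
  end.

Fixpoint coef (l : list (C * C)) (mu : C) : C :=
  match l with
  | nil => 0%C
  | (d, m) :: l' => Cplus (if Ceq_dec m mu then d else 0%C) (coef l' mu)
  end.

Definition others (l : list (C * C)) (mu : C) : list (C * C) :=
  filter (fun p => if Ceq_dec (snd p) mu then false else true) l.

Definition negate (l : list (C * C)) : list (C * C) :=
  map (fun p => (Copp (fst p), snd p)) l.

Lemma expsum_app l1 l2 n : expsum (l1 ++ l2) n = Cplus (expsum l1 n) (expsum l2 n).
Proof. induction l1 as [|[d m] l IH]; simpl; [ring | rewrite IH; ring]. Qed.

Lemma expsum_negate l n : expsum (negate l) n = Copp (expsum l n).
Proof. induction l as [|[d m] l IH]; simpl; [ring | rewrite IH; ring]. Qed.

Lemma coef_app l1 l2 mu : coef (l1 ++ l2) mu = Cplus (coef l1 mu) (coef l2 mu).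
Proof. induction l1 as [|[d m] l IH]; simpl; [ring | rewrite IH; ring]. Qed.

Lemma coef_negate l mu : coef (negate l) mu = Copp (coef l mu).
Proof.
  induction l as [|[d m] l IH]; simpl; [ring|].
  rewrite IH. destruct (Ceq_dec m mu); ring.
Qed.

Lemma coef_hit d mu l : coef ((d, mu) :: l) mu = Cplus d (coef l mu).
Proof. simpl. destruct (Ceq_dec mu mu); [reflexivity | contradiction]. Qed.

Lemma coef_miss d m mu l : m <> mu -> coef ((d, m) :: l) mu = coef l mu.
Proof. intro h. simpl. destruct (Ceq_dec m mu); [contradiction | ring]. Qed.

Lemma coef_support l mu : coef l mu <> 0%C -> In mu (map snd l).
Proof.
  induction l as [|[d m] l IH]; simpl; [tauto|].
  destruct (Ceq_dec m mu) as [e|e]; [now left|].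
  intro h. right. apply IH. intro E. apply h. rewrite E. ring.
Qed.

Lemma expsum_split l mu n :
  expsum l n = Cplus (Cmult (coef l mu) (Cpow mu n)) (expsum (others l mu) n).
Proof.
  unfold others. induction l as [|[d m] l IH]; simpl; [ring|].
  destruct (Ceq_dec m mu) as [e|e]; simpl; rewrite IH; [subst m|]; ring.
Qed.

(* Applying f |-> f(n+1) - m f(n) to an exponential sum rescales each
   coefficient d by (mu - m); in particular it kills the ratio m. *)
Definition shift_by (m : C) (l : list (C * C)) : list (C * C) :=
  map (fun p => (Cmult (fst p) (Cminus (snd p) m), snd p)) l.

Lemma expsum_shift_by m l n :
  expsum (shift_by m l) n = Cminus (expsum l (S n)) (Cmult m (expsum l n)).
Proof. induction l as [|[d u] l IH]; simpl; [ring | rewrite IH; ring]. Qed.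

(* Vandermonde isolation: if D nu^n + (a sum of k geometric sequences with
   ratios different from nu) vanishes for n < N, with k < N, then D = 0.
   Each step multiplies out one ratio m by the operator f |-> f(n+1) - m f(n). *)
Lemma isolate_ratio k : forall (l : list (C * C)) (D nu : C) (N : nat),
  length l = k -> (forall p, In p l -> snd p <> nu) -> (k < N)%nat ->
  (forall n, (n < N)%nat -> Cplus (Cmult D (Cpow nu n)) (expsum l n) = 0%C) ->
  D = 0%C.
Proof.
  induction k as [|k IH]; intros l D nu N Hk Hl HN H.
  - destruct l; [|discriminate]. specialize (H 0%nat HN). simpl in H.
    rewrite <- H. ring.
  - destruct l as [|[d m] l]; [discriminate|]. simpl in Hk.
    assert (Hm : m <> nu) by (apply (Hl (d, m)); now left).
    assert (HD : Cmult D (Cminus nu m) = 0%C).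
    { apply (IH (shift_by m l) _ nu (pred N)).
      - unfold shift_by. rewrite length_map. lia.
      - unfold shift_by. intros p Hp. apply in_map_iff in Hp.
        destruct Hp as [q [<- Hq]]. apply (Hl q). now right.
      - lia.
      - intros n Hn. rewrite expsum_shift_by.
        pose proof (H (S n) ltac:(lia)) as Hn1. pose proof (H n ltac:(lia)) as Hn0.
        simpl in Hn1, Hn0.
        transitivity (Cminus
          (Cplus (Cmult D (Cmult nu (Cpow nu n)))
                 (Cplus (Cmult d (Cmult m (Cpow m n))) (expsum l (S n))))
          (Cmult m (Cplus (Cmult D (Cpow nu n))
                          (Cplus (Cmult d (Cpow m n)) (expsum l n))))).
        + ring.
        + rewrite Hn1, Hn0. ring. }
    destruct (Cmult_integral _ _ HD) as [E|E]; [exact E|].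
    exfalso. apply Hm. replace nu with (Cplus m (Cminus nu m)) by ring.
    rewrite E. ring.
Qed.

Lemma expsum_zero_coef l N :
  (length l < N)%nat -> (forall n, (n < N)%nat -> expsum l n = 0%C) ->
  forall mu, coef l mu = 0%C.
Proof.
  intros HN H mu. apply (isolate_ratio _ (others l mu) _ mu N eq_refl).
  - unfold others. intros p Hp. apply filter_In in Hp as [_ Hp].
    destruct (Ceq_dec (snd p) mu); [discriminate | assumption].
  - pose proof (filter_length_le (fun p => if Ceq_dec (snd p) mu then false else true) l).
    unfold others. lia.
  - intros n Hn. rewrite <- (H n Hn), (expsum_split l mu n). ring.
Qed.

Definition diff5 (f : nat -> C) (n : nat) : C :=
  Cminus (Cplus (Cminus (Cplus (Cminus (f (5 + n)%nat) (Cmult 5 (f (4 + n)%nat)))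
                               (Cmult 10 (f (3 + n)%nat)))
                        (Cmult 10 (f (2 + n)%nat)))
                (Cmult 5 (f (1 + n)%nat)))
         (f n).

Definition weight5 (l : list (C * C)) : list (C * C) :=
  map (fun p => (Cmult (fst p) (Cpow (Cminus (snd p) 1) 5), snd p)) l.

Lemma diff5_expsum l n : diff5 (expsum l) n = expsum (weight5 l) n.
Proof.
  unfold diff5. induction l as [|[d m] l IH]; simpl in *; [ring|].
  rewrite <- IH. ring.
Qed.

Lemma coef_weight5 l mu :
  coef (weight5 l) mu = Cmult (Cpow (Cminus mu 1) 5) (coef l mu).
Proof.
  induction l as [|[d m] l IH]; simpl; [ring|].
  rewrite IH. destruct (Ceq_dec m mu) as [e|e]; [subst m|]; ring.
Qed.

Lemma diff5_sub f g n :
  diff5 (fun k => Cminus (f k) (g k)) n = Cminus (diff5 f n) (diff5 g n).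
Proof. unfold diff5. ring. Qed.

Definition tn (n : nat) : R := 2 + INR n / 10.

Lemma tn_Lambda J n : (2 <= J)%nat -> (n <= 20)%nat -> in_Lambda J (tn n).
Proof.
  intros hJ hn. split.
  - exists (Qmake (Z.of_nat (20 + n)) 10). unfold Q2R, tn. cbn [Qnum Qden].
    rewrite <- INR_IZR_INZ, plus_INR. simpl INR. field.
  - assert (h4 : 4 <= 2 ^ J).
    { replace J with (2 + (J - 2))%nat by lia. rewrite pow_add.
      pose proof (pow_R1_Rle 2 (J - 2) ltac:(lra)). simpl. lra. }
    apply le_INR in hn. simpl INR in hn. pose proof (pos_INR n). unfold tn. lra.
Qed.

Lemma diff5_quartic c4 c3 c1 c0 n :
  diff5 (fun k => RtoC (c4 * tn k ^ 4 + c3 * tn k ^ 3 + c1 * tn k + c0)) n = 0%C.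
Proof.
  unfold diff5, tn. rewrite !plus_INR. simpl INR.
  apply injective_projections; simpl; unfold Rdiv; ring.
Qed.

Lemma quartic_four_points c4 c3 c1 c0 :
  (forall tau, tau = 2 \/ tau = 5/2 \/ tau = 3 \/ tau = 4 ->
     c4 * tau ^ 4 + c3 * tau ^ 3 + c1 * tau + c0 = 0) ->
  c4 = 0 /\ c3 = 0 /\ c1 = 0 /\ c0 = 0.
Proof.
  intro H.
  pose proof (H 2 ltac:(tauto)). pose proof (H (5/2) ltac:(tauto)).
  pose proof (H 3 ltac:(tauto)). pose proof (H 4 ltac:(tauto)).
  simpl in *. repeat split; lra.
Qed.

Definition phi_range (p : R) : Prop := (-1 < p < 0) \/ (0 < p < 1).

(* Log-modulus and argument of phi, so that phi^tau = e^(tau (Lg phi + i ang phi)). *)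
Definition Lg (p : R) : R := ln (Rabs p).
Definition ang (p : R) : R := if Rlt_dec 0 p then 0 else PI.

(* Coefficients of tau, phi^tau and cos(beta tau/2)-type terms. *)
Definition ar_linear (p v : R) : R := v / (p - 1) ^ 2.
Definition ar_weight (p v : R) : R := 2 * p * v / ((p - 1) ^ 3 * (p + 1)).
Definition sin_weight (a b : R) : R := a ^ 2 / (1 - cos b).

(* The quartic part of tau^2 nu_tau(theta). *)
Definition poly_part (t : theta) (tau : R) : R :=
  let p := th_phi t in let v := th_varsigma2 t in
  th_omega2 t / 16 * tau ^ 4 + th_gamma2 t / 12 * tau ^ 3
  + (th_sigma2 t + ar_linear p v + th_gamma2 t / 6) * tau
  + (6 * th_Q2 t + 3 * ar_weight p v + 3 / 2 * sin_weight (th_alpha t) (th_beta t)).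

Lemma phi_facts p : phi_range p ->
  p <> 0 /\ p - 1 <> 0 /\ p + 1 <> 0 /\ Lg p < 0 /\ 0 <= ang p <= PI.
Proof.
  intros hp. pose proof PI_RGT_0. unfold phi_range, Lg, ang in *.
  assert (0 < Rabs p < 1) by (destruct hp; [rewrite Rabs_left | rewrite Rabs_pos_eq]; lra).
  assert (ln (Rabs p) < 0) by (rewrite <- ln_1; apply ln_increasing; lra).
  destruct (Rlt_dec 0 p); repeat split; lra.
Qed.

(* beta in (0, pi] keeps the denominator 1 - cos beta of nu positive. *)
Lemma beta_facts b : 0 < b <= PI -> cos b < 1.
Proof. intros hb. rewrite <- cos_0. apply cos_decreasing_1; lra. Qed.

Lemma phi_of_Lg_ang p1 p2 : phi_range p1 -> phi_range p2 ->
  Lg p1 = Lg p2 -> ang p1 = ang p2 -> p1 = p2.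
Proof.
  intros h1 h2 e1 e2. pose proof PI_RGT_0. unfold phi_range, Lg, ang in *.
  apply ln_inv in e1; [| apply Rabs_pos_lt; lra | apply Rabs_pos_lt; lra].
  destruct (Rlt_dec 0 p1), (Rlt_dec 0 p2); try lra.
  - rewrite !Rabs_pos_eq in e1; lra.
  - rewrite !Rabs_left in e1; lra.
Qed.

Lemma cpow_cexp p x : p <> 0 -> cpow p x = cexp (x * Lg p) (ang p * x).
Proof.
  intros hp. unfold cpow, cexp, Lg, ang. destruct (Rlt_dec 0 p).
  - rewrite Rabs_pos_eq by lra. rewrite Rmult_0_l, cos_0, sin_0. unfold RtoC. f_equal; ring.
  - rewrite Rabs_left by lra. reflexivity.
Qed.

(* tau^2 nu_tau = quartic part + combination of six exponentials in tau;
   the cosines are split as (1 - cos y)^2 = 3/2 - (e^(iy) + e^(-iy))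
   + (e^(2iy) + e^(-2iy))/4. *)
Lemma nu_quasi_polynomial t tau :
  phi_range (th_phi t) -> cos (th_beta t) < 1 -> tau <> 0 ->
  let p := th_phi t in let c := ar_weight p (th_varsigma2 t) in
  let A := sin_weight (th_alpha t) (th_beta t) in let b := th_beta t in
  Cmult (RtoC (tau ^ 2)) (nu tau t) =
  (RtoC (poly_part t tau)
   + RtoC c * cexp (tau * Lg p) (ang p * tau)
   + RtoC (-4 * c) * cexp (tau / 2 * Lg p) (ang p * (tau / 2))
   + RtoC (- A) * cexp 0 (b * tau / 2) + RtoC (- A) * cexp 0 (- (b * tau / 2))
   + RtoC (A / 4) * cexp 0 (b * tau) + RtoC (A / 4) * cexp 0 (- (b * tau)))%C.
Proof.
  intros hp hb ht. destruct (phi_facts _ hp) as (h0 & h1 & h2 & _).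
  destruct t as [s q p v w g a b]; cbn in *. unfold nu; cbn.
  rewrite !cpow_cexp by exact h0.
  set (x := b * tau / 2). replace (b * tau) with (2 * x) by (unfold x; field).
  unfold poly_part, ar_linear, ar_weight, sin_weight, cexp, RtoC, Cdiv, Cinv,
    Cplus, Cmult, Cminus, Copp; cbn.
  rewrite exp_0, !cos_neg, !sin_neg, cos_2a_cos, sin_2a.
  apply injective_projections; cbn; field; repeat split; auto; try lra.
  all: apply Rmult_integral_contrapositive; split; auto;
       apply Rmult_integral_contrapositive; split; auto using pow_nonzero.
Qed.

(* At tau_n the six exponentials are geometric sequences in n, with ratios
   e^((Lg phi + i ang phi)/10), e^((Lg phi + i ang phi)/20), e^(+-i beta/20)
   and e^(+-i beta/10). *)
Definition terms (p v a b : R) : list (C * C) :=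
  let c := ar_weight p v in let A := sin_weight a b in
  [ (Cmult (RtoC c) (cexp (2 * Lg p) (2 * ang p)), cexp (Lg p / 10) (ang p / 10));
    (Cmult (RtoC (-4 * c)) (cexp (Lg p) (ang p)), cexp (Lg p / 20) (ang p / 20));
    (Cmult (RtoC (- A)) (cexp 0 b), cexp 0 (b / 20));
    (Cmult (RtoC (- A)) (cexp 0 (- b)), cexp 0 (- b / 20));
    (Cmult (RtoC (A / 4)) (cexp 0 (2 * b)), cexp 0 (b / 10));
    (Cmult (RtoC (A / 4)) (cexp 0 (- (2 * b))), cexp 0 (- b / 10)) ].

Definition sample_terms (t : theta) : list (C * C) :=
  terms (th_phi t) (th_varsigma2 t) (th_alpha t) (th_beta t).

Lemma nu_samples t n :
  phi_range (th_phi t) -> cos (th_beta t) < 1 ->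
  Cmult (RtoC (tn n ^ 2)) (nu (tn n) t) =
  Cplus (RtoC (poly_part t (tn n))) (expsum (sample_terms t) n).
Proof.
  intros hp hb. assert (ht : tn n <> 0) by (unfold tn; pose proof (pos_INR n); lra).
  rewrite (nu_quasi_polynomial t (tn n) hp hb ht). cbv zeta.
  unfold sample_terms, terms, expsum.
  set (L := Lg (th_phi t)). set (A := ang (th_phi t)). set (b := th_beta t).
  replace (tn n * L) with (2 * L + INR n * (L / 10)) by (unfold tn; field).
  replace (A * tn n) with (2 * A + INR n * (A / 10)) by (unfold tn; field).
  replace (tn n / 2 * L) with (L + INR n * (L / 20)) by (unfold tn; field).
  replace (A * (tn n / 2)) with (A + INR n * (A / 20)) by (unfold tn; field).
  replace (- (b * tn n / 2)) with (- b + INR n * (- b / 20)) by (unfold tn; field).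
  replace (b * tn n / 2) with (b + INR n * (b / 20)) by (unfold tn; field).
  replace (- (b * tn n)) with (- (2 * b) + INR n * (- b / 10)) by (unfold tn; field).
  replace (b * tn n) with (2 * b + INR n * (b / 10)) by (unfold tn; field).
  rewrite !cexp_geom, !cexp_geom_unit. ring.
Qed.

(* The ratios of the phi^(tau/2) term and of the e^(i beta tau/2) term;
   neither equals 1, the "ratio" of the quartic part. *)
Definition phi_ratio (p : R) : C := cexp (Lg p / 20) (ang p / 20).
Definition beta_ratio (b : R) : C := cexp 0 (b / 20).

(* Two ratios of the lists above are distinct once their moduli or
   arguments (all in [-pi/2, pi/2]) differ. *)
Ltac distinct_ratios :=
  let E := fresh in
  intro E; apply cexp_inj in E; [destruct E; lra | split; lra | split; lra].

Lemma phi_ratio_neq1 p : phi_range p -> phi_ratio p <> RtoC 1.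
Proof.
  intro hp. destruct (phi_facts p hp) as (_ & _ & _ & hL & hA). pose proof PI_RGT_0.
  rewrite <- cexp_0. unfold phi_ratio. distinct_ratios.
Qed.

Lemma beta_ratio_neq1 b : 0 < b <= PI -> beta_ratio b <> RtoC 1.
Proof. intro hb. pose proof PI_RGT_0. rewrite <- cexp_0. unfold beta_ratio. distinct_ratios. Qed.

(* Only the phi^(tau/2) term carries the ratio phi_ratio phi, so its
   coefficient is nonzero and proportional to varsigma^2. *)
Lemma coef_phi_ratio p v a b : phi_range p -> 0 < b <= PI ->
  coef (terms p v a b) (phi_ratio p) =
  Cmult (RtoC (-4 * ar_weight p v)) (cexp (Lg p) (ang p)).
Proof.
  intros hp hb. destruct (phi_facts p hp) as (_ & _ & _ & hL & hA). pose proof PI_RGT_0.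
  unfold terms, phi_ratio.
  rewrite coef_miss, coef_hit, !coef_miss by distinct_ratios. simpl. ring.
Qed.

(* Only the e^(i beta tau/2) term carries the ratio beta_ratio beta. *)
Lemma coef_beta_ratio p v a b : phi_range p -> 0 < b <= PI ->
  coef (terms p v a b) (beta_ratio b) = Cmult (RtoC (- sin_weight a b)) (cexp 0 b).
Proof.
  intros hp hb. destruct (phi_facts p hp) as (_ & _ & _ & hL & hA). pose proof PI_RGT_0.
  unfold terms, beta_ratio.
  rewrite coef_miss, coef_miss, coef_hit, !coef_miss by distinct_ratios. simpl. ring.
Qed.

Lemma phi_ratio_match p p' v' a' b' : phi_range p -> phi_range p' -> 0 < b' <= PI ->
  coef (terms p' v' a' b') (phi_ratio p) <> 0%C ->
  (Lg p = 2 * Lg p' /\ ang p = 2 * ang p') \/ (Lg p = Lg p' /\ ang p = ang p').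
Proof.
  intros hp hp' hb' H. pose proof PI_RGT_0.
  destruct (phi_facts p hp) as (_ & _ & _ & hL & hA).
  destruct (phi_facts p' hp') as (_ & _ & _ & hL' & hA').
  apply coef_support in H. unfold terms, phi_ratio in H. simpl in H.
  destruct H as [E|[E|[E|[E|[E|[E|[]]]]]]];
    (apply cexp_inj in E; [ | split; lra | split; lra]); destruct E;
    first [left; split; lra | right; split; lra | exfalso; lra].
Qed.

Lemma beta_ratio_match b p' v' a' b' : 0 < b <= PI -> phi_range p' -> 0 < b' <= PI ->
  coef (terms p' v' a' b') (beta_ratio b) <> 0%C -> b = 2 * b' \/ b = b'.
Proof.
  intros hb hp' hb' H. pose proof PI_RGT_0.
  destruct (phi_facts p' hp') as (_ & _ & _ & hL' & hA').
  apply coef_support in H. unfold terms, beta_ratio in H. simpl in H.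
  destruct H as [E|[E|[E|[E|[E|[E|[]]]]]]];
    (apply cexp_inj in E; [ | split; lra | split; lra]); destruct E; lra.
Qed.

Lemma ar_weight_neq0 p v : phi_range p -> 0 < v -> ar_weight p v <> 0.
Proof.
  intros hp hv. destruct (phi_facts p hp) as (h0 & h1 & h2 & _).
  unfold ar_weight. apply Rmult_integral_contrapositive; split.
  - apply Rmult_integral_contrapositive; split; lra.
  - apply Rinv_neq_0_compat, Rmult_integral_contrapositive; split; auto using pow_nonzero.
Qed.

Lemma ar_weight_inj p v1 v2 : phi_range p -> ar_weight p v1 = ar_weight p v2 -> v1 = v2.
Proof.
  intros hp e. destruct (phi_facts p hp) as (h0 & h1 & h2 & _). unfold ar_weight in e.
  assert (D : (p - 1) ^ 3 * (p + 1) <> 0)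
    by (apply Rmult_integral_contrapositive; split; auto using pow_nonzero).
  apply (Rmult_eq_compat_r ((p - 1) ^ 3 * (p + 1) / (2 * p))) in e.
  field_simplify in e; auto.
Qed.

Lemma sin_weight_inj a1 a2 b : 0 < a1 -> 0 < a2 -> cos b < 1 ->
  sin_weight a1 b = sin_weight a2 b -> a1 = a2.
Proof.
  intros h1 h2 hb e. unfold sin_weight in e.
  apply (Rmult_eq_compat_r (1 - cos b)) in e. field_simplify in e; nra.
Qed.

Section Identification.

Variables t1 t2 : theta.
Hypothesis H1 : in_Theta t1.
Hypothesis H2 : in_Theta t2.
Hypothesis Hsamples : forall n, (n <= 20)%nat -> nu (tn n) t1 = nu (tn n) t2.

Lemma samples_expsum n : (n <= 20)%nat ->
  expsum (sample_terms t1 ++ negate (sample_terms t2)) n =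
  Cminus (RtoC (poly_part t2 (tn n))) (RtoC (poly_part t1 (tn n))).
Proof.
  intro hn. destruct H1 as (_ & _ & _ & _ & _ & _ & hp1 & hb1).
  destruct H2 as (_ & _ & _ & _ & _ & _ & hp2 & hb2).
  pose proof (nu_samples t1 n hp1 (beta_facts _ hb1)) as E1.
  pose proof (nu_samples t2 n hp2 (beta_facts _ hb2)) as E2.
  rewrite (Hsamples n hn), E2 in E1.
  rewrite expsum_app, expsum_negate.
  replace (expsum (sample_terms t1) n) with
    (Cminus (Cplus (RtoC (poly_part t2 (tn n))) (expsum (sample_terms t2) n))
            (RtoC (poly_part t1 (tn n)))) by (rewrite E1; ring).
  ring.
Qed.

(* Away from the ratio 1 (the quartic part), the coefficients agree. *)
Lemma coef_agree mu : mu <> RtoC 1 ->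
  coef (sample_terms t1) mu = coef (sample_terms t2) mu.
Proof.
  intro hmu. set (l := sample_terms t1 ++ negate (sample_terms t2)).
  assert (Hw : forall n, (n < 16)%nat -> expsum (weight5 l) n = 0%C).
  { intros n hn. rewrite <- diff5_expsum.
    transitivity (diff5 (fun k => Cminus (RtoC (poly_part t2 (tn k)))
                                         (RtoC (poly_part t1 (tn k)))) n).
    - unfold diff5. rewrite !samples_expsum by lia. reflexivity.
    - rewrite diff5_sub. unfold poly_part. rewrite !diff5_quartic. ring. }
  assert (Hlen : (length (weight5 l) < 16)%nat)
    by (unfold l, weight5, negate, sample_terms, terms; cbn; lia).
  pose proof (expsum_zero_coef (weight5 l) 16 Hlen Hw mu) as Hc.
  rewrite coef_weight5 in Hc. unfold l in Hc. rewrite coef_app, coef_negate in Hc.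
  destruct (Cmult_integral _ _ Hc) as [E|E].
  - exfalso. apply (Cpow_nz (Cminus mu 1) 5); [|exact E].
    intro E'. apply hmu. replace mu with (Cplus (Cminus mu 1) 1) by ring.
    rewrite E'. ring.
  - replace (coef (sample_terms t1) mu)
      with (Cplus (Cplus (coef (sample_terms t1) mu) (Copp (coef (sample_terms t2) mu)))
                  (coef (sample_terms t2) mu)) by ring.
    rewrite E. ring.
Qed.

(* phi_ratio phi1 has a nonzero coefficient, hence occurs among the ratios
   of theta2: |phi1| = |phi2|^2 or phi1 = phi2 (in polar form), and
   symmetrically; as |phi| < 1 only phi1 = phi2 survives. *)
Lemma phi_identified : th_phi t1 = th_phi t2.
Proof.
  destruct H1 as (_ & _ & _ & _ & _ & _ & hp1 & hb1).
  destruct H2 as (_ & _ & _ & _ & _ & _ & hp2 & hb2).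
  assert (nz : forall t, in_Theta t -> coef (sample_terms t) (phi_ratio (th_phi t)) <> 0%C).
  { intros t (_ & _ & hv & _ & _ & _ & hp & hb). unfold sample_terms.
    rewrite coef_phi_ratio by assumption.
    apply Cmult_neq_0; [apply RtoC_neq0 | apply cexp_neq0].
    pose proof (ar_weight_neq0 _ _ hp hv). lra. }
  pose proof (nz t1 H1) as nz1. pose proof (nz t2 H2) as nz2.
  rewrite coef_agree in nz1 by now apply phi_ratio_neq1.
  rewrite <- coef_agree in nz2 by now apply phi_ratio_neq1.
  pose proof (phi_ratio_match _ _ _ _ _ hp1 hp2 hb2 nz1).
  pose proof (phi_ratio_match _ _ _ _ _ hp2 hp1 hb1 nz2).
  destruct (phi_facts _ hp1) as (_ & _ & _ & hL1 & _).
  destruct (phi_facts _ hp2) as (_ & _ & _ & hL2 & _).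
  apply phi_of_Lg_ang; auto; lra.
Qed.

(* Compare the coefficients of phi_ratio phi. *)
Lemma varsigma_identified : th_varsigma2 t1 = th_varsigma2 t2.
Proof.
  destruct H1 as (_ & _ & _ & _ & _ & _ & hp1 & hb1).
  destruct H2 as (_ & _ & _ & _ & _ & _ & hp2 & hb2).
  pose proof (coef_agree (phi_ratio (th_phi t1)) (phi_ratio_neq1 _ hp1)) as E.
  unfold sample_terms in E. rewrite phi_identified in E, hp1.
  rewrite !coef_phi_ratio in E by assumption.
  apply RtoC_mult_reg in E; [|apply cexp_neq0].
  apply (ar_weight_inj (th_phi t2)); [assumption | lra].
Qed.

(* Same argument as for phi with beta_ratio: beta1 = 2 beta2 or beta1 = beta2,
   and symmetrically. *)
Lemma beta_identified : th_beta t1 = th_beta t2.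
Proof.
  destruct H1 as (_ & _ & _ & _ & _ & _ & hp1 & hb1).
  destruct H2 as (_ & _ & _ & _ & _ & _ & hp2 & hb2).
  assert (nz : forall t, in_Theta t -> coef (sample_terms t) (beta_ratio (th_beta t)) <> 0%C).
  { intros t (_ & _ & _ & _ & _ & ha & hp & hb). unfold sample_terms.
    rewrite coef_beta_ratio by assumption.
    apply Cmult_neq_0; [apply RtoC_neq0 | apply cexp_neq0].
    pose proof (beta_facts _ hb). unfold sin_weight.
    assert (0 < th_alpha t ^ 2 / (1 - cos (th_beta t))) by (apply Rdiv_lt_0_compat; nra).
    lra. }
  pose proof (nz t1 H1) as nz1. pose proof (nz t2 H2) as nz2.
  rewrite coef_agree in nz1 by now apply beta_ratio_neq1.
  rewrite <- coef_agree in nz2 by now apply beta_ratio_neq1.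
  pose proof (beta_ratio_match _ _ _ _ _ hb1 hp2 hb2 nz1).
  pose proof (beta_ratio_match _ _ _ _ _ hb2 hp1 hb1 nz2).
  lra.
Qed.

(* Compare the coefficients of beta_ratio beta. *)
Lemma alpha_identified : th_alpha t1 = th_alpha t2.
Proof.
  destruct H1 as (_ & _ & _ & _ & _ & ha1 & hp1 & hb1).
  destruct H2 as (_ & _ & _ & _ & _ & ha2 & hp2 & hb2).
  pose proof (coef_agree (beta_ratio (th_beta t1)) (beta_ratio_neq1 _ hb1)) as E.
  unfold sample_terms in E. rewrite beta_identified in E, hb1.
  rewrite !coef_beta_ratio in E by assumption.
  apply RtoC_mult_reg in E; [|apply cexp_neq0].
  apply (sin_weight_inj _ _ (th_beta t2)); auto using beta_facts. lra.
Qed.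

(* With the exponential parts identified, the quartic parts agree at every
   sample, which pins down sigma^2, Q^2, omega^2 and gamma^2. *)
Theorem theta_identified : t1 = t2.
Proof.
  assert (Hterms : sample_terms t1 = sample_terms t2).
  { unfold sample_terms.
    rewrite phi_identified, varsigma_identified, alpha_identified, beta_identified.
    reflexivity. }
  assert (Hpoly : forall n, (n <= 20)%nat -> poly_part t1 (tn n) = poly_part t2 (tn n)).
  { intros n hn. pose proof (samples_expsum n hn) as E.
    rewrite Hterms, expsum_app, expsum_negate in E.
    apply (f_equal fst) in E. cbn in E. lra. }
  pose proof phi_identified as ep. pose proof varsigma_identified as ev.
  pose proof alpha_identified as ea. pose proof beta_identified as eb.
  destruct t1 as [s1 q1 p1 v1 w1 g1 a1 b1], t2 as [s2 q2 p2 v2 w2 g2 a2 b2].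
  cbn in ep, ev, ea, eb. subst p2 v2 a2 b2.
  destruct (quartic_four_points ((w1 - w2) / 16) ((g1 - g2) / 12)
              (s1 - s2 + (g1 - g2) / 6) (6 * (q1 - q2))) as (? & ? & ? & ?).
  { intros tau Htau.
    assert (Hn : exists n, (n <= 20)%nat /\ tn n = tau).
    { unfold tn. destruct Htau as [-> | [-> | [-> | ->]]];
        [exists 0%nat | exists 5%nat | exists 10%nat | exists 20%nat];
        (split; [lia | simpl; field]). }
    destruct Hn as [n [hn <-]]. pose proof (Hpoly n hn) as E.
    unfold poly_part in E. cbn in E. lra. }
  assert (w1 = w2 /\ g1 = g2 /\ s1 = s2 /\ q1 = q2) as (-> & -> & -> & ->) by lra.
  reflexivity.
Qed.

End Identification.

(* Lemma 3: the scales tau_n, n <= 20, belong to Lambda as soon as J >= 2. *)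
Theorem lemma3 (J : nat) (hJ : (2 <= J)%nat) (t1 t2 : theta) :
  in_Theta t1 -> in_Theta t2 ->
  (forall tau : R, in_Lambda J tau -> nu tau t1 = nu tau t2) ->
  t1 = t2.
Proof.
  intros H1 H2 Heq. apply theta_identified; auto.
  intros n hn. apply Heq, tn_Lambda; assumption.
Qed.
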